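(* Let $R$ be a ring and $T$ a right $R$-module. Assume that either (1) $R$ is right perfect, or (2) $R$ is semiperfect and $T$ is finitely presented, or (3) $T$ has projective dimension at most $1$. Then $T$ is $\tau$-rigid if and only if $\operatorname{Gen}T\subseteq T^{\perp}$. In particular, if $T$ is quasi-tilting, then $T$ is $\tau$-rigid.
   Context: A module $T$ is $\tau$-rigid if there exists a projective presentation $P_1\xrightarrow{\varphi}P_0\to T\to 0$ such that $\operatorname{Hom}_R(\varphi,M)$ is surjective for every $M\in\operatorname{Gen}T$. $\operatorname{Gen}T$ is the class of epimorphic images of direct sums of copies of $T$; $\operatorname{Pres}T$ is the class of modules $M$ admitting an exact sequence $T_1\to T_0\to M\to 0$ with $T_0,T_1$ direct summands of direct sums of copies of $T$; $T^{\perp}=\{M:\operatorname{Ext}^1_R(T,M)=0\}$. $T$ is quasi-tilting if $\operatorname{Pres}T=\operatorname{Gen}T\subseteq T^{\perp}$. *)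

(* Right R-modules are modelled as left modules over the
   converse ring R^c (lmodType R^c); module maps are {linear _ -> _}. *)
From HB Require Import structures.
From mathcomp Require Import all_boot all_order all_algebra.
Set Implicit Arguments. Unset Strict Implicit. Unset Printing Implicit Defensive.
Import GRing.Theory.
Local Open Scope ring_scope.

Section ModDefs.
Variable R : pzRingType.
Notation rmod := (lmodType R^c).

Definition surj {U V : Type} (f : U -> V) := forall v, exists u, f u = v.
Definition exact_at {U V W : rmod} (a : U -> V) (b : V -> W) :=
  forall v, b v = 0 <-> exists u, a u = v.

Definition submodule {P : rmod} (S : P -> Prop) :=
  S 0 /\ (forall x y, S x -> S y -> S (x + y)) /\ (forall (r : R^c) x, S x -> S (r *: x)).

Definition projective (P : rmod) :=
  forall (M N : rmod) (p : {linear M -> N}) (f : {linear P -> N}),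
    surj p -> exists g : {linear P -> M}, forall x, p (g x) = f x.

(* free right module R^n = row vectors over R^c *)
Definition fin_generated (T : rmod) :=
  exists (n : nat) (b : {linear 'rV[R^c]_n -> T}), surj b.

Definition fin_presented (T : rmod) :=
  exists (n m : nat) (a : {linear 'rV[R^c]_m -> 'rV[R^c]_n})
         (b : {linear 'rV[R^c]_n -> T}), surj b /\ exact_at a b.

Definition pd_le1 (T : rmod) :=
  exists (P1 P0 : rmod) (a : {linear P1 -> P0}) (b : {linear P0 -> T}),
    [/\ projective P1, projective P0, injective a, surj b & exact_at a b].

Definition projective_cover (P M : rmod) (p : {linear P -> M}) :=
  [/\ projective P, surj p &
      forall S : P -> Prop, submodule S ->
        (forall x, exists y z, S y /\ p z = 0 /\ x = y + z) ->
        forall x, S x].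

(* Bass: R right perfect iff every right R-module has a projective cover;
         R semiperfect iff every f.g. right R-module has a projective cover *)
Definition right_perfect :=
  forall M : rmod, exists (P : rmod) (p : {linear P -> M}), projective_cover p.
Definition semiperfect :=
  forall M : rmod, fin_generated M ->
    exists (P : rmod) (p : {linear P -> M}), projective_cover p.

(* Gen T: M is an epimorphic image of T^(I); a map T^(I) -> M is a family
   (f_i)_i of maps T -> M, and its image consists of finite sums of f_i(t). *)
Definition Gen (T M : rmod) :=
  exists (I : Type) (f : I -> {linear T -> M}),
    forall m : M, exists s : seq (I * T), m = \sum_(q <- s) f q.1 q.2.

(* Add T: X is a direct summand of some T^(I).  A map X -> T^(I) is a family
   (h_i) of maps X -> T with, for every x, h_i x = 0 for almost all i; the
   composite X -> T^(I) -> X (second map given by (g_i)) is the identity. *)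
Definition Add (T X : rmod) :=
  exists (I : eqType) (g : I -> {linear T -> X}) (h : I -> {linear X -> T}),
    forall x : X, exists s : seq I,
      uniq s /\ (forall i, i \notin s -> h i x = 0) /\
      x = \sum_(i <- s) g i (h i x).

Definition Pres (T M : rmod) :=
  exists (T1 T0 : rmod) (a : {linear T1 -> T0}) (b : {linear T0 -> M}),
    [/\ Add T T1, Add T T0, surj b & exact_at a b].

(* Ext^1_R(T,M) = 0 (Yoneda description: every extension 0 -> M -> E -> T -> 0
   splits) *)
Definition Ext1_zero (T M : rmod) :=
  forall (E : rmod) (i : {linear M -> E}) (p : {linear E -> T}),
    injective i -> surj p -> exact_at i p ->
    exists s : {linear T -> E}, forall t, p (s t) = t.

Definition perp (T M : rmod) := Ext1_zero T M.

Definition tau_rigid (T : rmod) :=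
  exists (P1 P0 : rmod) (phi : {linear P1 -> P0}) (pi : {linear P0 -> T}),
    [/\ projective P1, projective P0, surj pi, exact_at phi pi &
      forall M : rmod, Gen T M ->
        forall g : {linear P1 -> M},
          exists f : {linear P0 -> M}, forall x, f (phi x) = g x].

Definition quasi_tilting (T : rmod) :=
  (forall M : rmod, Pres T M <-> Gen T M) /\
  (forall M : rmod, Gen T M -> perp T M).

End ModDefs.

From HB Require Import structures.
From mathcomp Require Import all_boot all_order all_algebra.
From mathcomp Require Import boolp.
Set Implicit Arguments. Unset Strict Implicit. Unset Printing Implicit Defensive.
Import GRing.Theory.
Local Open Scope ring_scope.

(* Gen T ⊆ T^⊥ for τ-rigid T: lift a projective presentation along an
   extension 0 -> M -> E -> T -> 0, extend the induced map P1 -> M along phi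
   and correct the lift by it, which yields a splitting.
   Conversely, in each of the three cases T has a projective presentation
   P1 --phi--> P0 -> T whose kernel ker phi is superfluous in P1 (P1 is a
   projective cover of the syzygy, or phi is injective).  Given g : P1 -> M
   with M in Gen T, the quotient N = M / g(ker phi) lies in Gen T, hence in
   T^⊥, so the pushout of 0 -> im phi -> P0 -> T -> 0 along the map induced
   by g splits and g extends modulo g(ker phi) to some f : P0 -> M.  Then
   g - f phi takes values in g(ker phi), and superfluity forces it to be 0. *)

Definition linmap (R : pzRingType) (U V : lmodType R) (f : U -> V) (fL : linear f)
  : {linear U -> V} := HB.pack f (GRing.isLinear.Build R U V *:%R f fL).

Section LinearMaps.
Variables (R : pzRingType) (U V W : lmodType R).

Lemma factor_through_surj (pi : {linear U -> V}) (d : {linear U -> W}) :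
  surj pi -> (forall x, pi x = 0 -> d x = 0) ->
  exists s : {linear V -> W}, forall x, s (pi x) = d x.
Proof.
move=> pi_surj dK.
pose pre v := proj1_sig (cid (pi_surj v)).
have preK v : pi (pre v) = v by rewrite /pre; case: cid.
have d_pi x y : pi x = pi y -> d x = d y.
  by move=> eq_pi; apply/eqP; rewrite -subr_eq0 -linearB dK // linearB eq_pi subrr.
have sL : linear (d \o pre).
  by move=> a v w; rewrite /= -linearP; apply: d_pi; rewrite linearP !preK.
by exists (linmap sL) => x; apply: d_pi; rewrite preK.
Qed.

Lemma factor_through_inj (i : {linear V -> W}) (d : {linear U -> W}) :
  injective i -> (forall x, exists v, i v = d x) ->
  exists f : {linear U -> V}, forall x, i (f x) = d x.
Proof.
move=> i_inj d_im.
pose f x := proj1_sig (cid (d_im x)).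
have fK x : i (f x) = d x by rewrite /f; case: cid.
have fL : linear f by move=> a x y; apply: i_inj; rewrite linearP !fK linearP.
by exists (linmap fL).
Qed.

End LinearMaps.

Section Kernel.
Variables (R : pzRingType) (U V : lmodType R) (f : {linear U -> V}).

Record kerm := Kerm { kerval : U; _ : f kerval == 0 }.
HB.instance Definition _ := [isSub for kerval].
HB.instance Definition _ := [Choice of kerm by <:].

Lemma kerm_subsemimod_closed : subsemimod_closed [pred x | f x == 0].
Proof.
split; [split=> [|x y] | move=> a x]; rewrite !inE ?linear0 ?linearD ?linearZ_LR //.
  by move=> /eqP-> /eqP->; rewrite addr0.
by move=> /eqP->; rewrite scaler0.
Qed.
HB.instance Definition _ :=
  GRing.SubChoice_isSubLmodule.Build R U _ kerm kerm_subsemimod_closed.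

Lemma kermP (x : kerm) : f (val x) = 0.
Proof. by case: x => u /= /eqP. Qed.

End Kernel.

Section Cokernel.
Import Quotient.
Local Open Scope quotient_scope.
Variables (R : pzRingType) (U V : lmodType R) (f : {linear U -> V}).

Definition im_pred : {pred V} := fun v => `[< exists u, f u = v >].

Lemma im_pred_zmod_closed : zmod_closed im_pred.
Proof.
split=> [|_ _ /asboolP[x <-] /asboolP[y <-]]; apply/asboolP.
  by exists 0; rewrite linear0.
by exists (x - y); rewrite linearB.
Qed.
HB.instance Definition _ := GRing.isZmodClosed.Build V im_pred im_pred_zmod_closed.

Definition coker := {quot im_pred}.
HB.instance Definition _ := GRing.Zmodule.on coker.

Definition coker_proj (v : V) : coker := \pi v.

Lemma coker_projD : {morph coker_proj : v w / v + w}.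
Proof. exact: raddfD. Qed.

Lemma coker_reprK : cancel repr coker_proj.
Proof. exact: reprK. Qed.

Lemma coker_proj_eqP v w :
  reflect (exists u, f u = v - w) (coker_proj v == coker_proj w).
Proof. by rewrite piE; apply: asboolP. Qed.

Definition coker_scale (a : R) (x : coker) : coker := coker_proj (a *: repr x).

Lemma coker_projZ a v : coker_proj (a *: v) = coker_scale a (coker_proj v).
Proof.
apply/eqP/coker_proj_eqP.
have /eqP/coker_proj_eqP[u fu] := coker_reprK (coker_proj v).
by exists (- (a *: u)); rewrite linearN linearZ_LR fu scalerBr opprB.
Qed.

Lemma coker_scaleA a b x : coker_scale a (coker_scale b x) = coker_scale (a * b) x.
Proof. by rewrite -[x]coker_reprK -(coker_projZ b) -!coker_projZ scalerA. Qed.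

Lemma coker_scale1 : left_id 1 coker_scale.
Proof. by move=> x; rewrite -[x]coker_reprK -coker_projZ scale1r. Qed.

Lemma coker_scaleDr : right_distributive coker_scale +%R.
Proof.
move=> a x y; rewrite -[x]coker_reprK -[y]coker_reprK -coker_projD.
by rewrite -!coker_projZ scalerDr coker_projD.
Qed.

Lemma coker_scaleDl x : {morph coker_scale^~ x : a b / a + b}.
Proof. by move=> a b; rewrite -[x]coker_reprK -!coker_projZ scalerDl coker_projD. Qed.

HB.instance Definition _ := GRing.Zmodule_isLmodule.Build R coker
  coker_scaleA coker_scale1 coker_scaleDr coker_scaleDl.

Lemma coker_proj_is_linear : linear coker_proj.
Proof. by move=> a v w; rewrite coker_projD coker_projZ. Qed.
HB.instance Definition _ :=
  GRing.isLinear.Build R V coker *:%R coker_proj coker_proj_is_linear.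

Lemma coker_proj_eq0 v : coker_proj v = 0 <-> exists u, f u = v.
Proof.
rewrite -(linear0 coker_proj).
by split=> [/eqP/coker_proj_eqP | ?]; last apply/eqP/coker_proj_eqP; rewrite subr0.
Qed.

Lemma coker_proj_surj : surj coker_proj.
Proof. by move=> x; exists (repr x); rewrite coker_reprK. Qed.

End Cokernel.

Section Modules.
Variable R : pzRingType.
Notation rmod := (lmodType R^c).

Lemma exact_at_comp0 (U V W : rmod) (a : U -> V) (b : V -> W) :
  exact_at a b -> forall x, b (a x) = 0.
Proof. by move=> ab x; apply/ab; exists x. Qed.

Lemma rV_projective n : projective 'rV[R^c]_n.
Proof.
move=> M N p f p_surj.
pose m (j : 'I_n) := proj1_sig (cid (p_surj (f 'e_j))).
have mK j : p (m j) = f 'e_j by rewrite /m; case: cid.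
pose g (v : 'rV[R^c]_n) := \sum_(j < n) v 0 j *: m j.
have gL : linear g.
  move=> a x y; rewrite /g scaler_sumr -big_split /=; apply: eq_bigr => j _.
  by rewrite !mxE scalerDl scalerA.
exists (linmap gL) => x; rewrite /= /g linear_sum {2}(row_sum_delta x) linear_sum.
by apply: eq_bigr => j _; rewrite !linearZ_LR mK.
Qed.

Lemma Gen_epi (T M N : rmod) (q : {linear M -> N}) : surj q -> Gen T M -> Gen T N.
Proof.
move=> q_surj [I [f f_gen]]; exists I, (fun j => q \o f j) => n.
have [m <-] := q_surj n; have [s ->] := f_gen m.
by exists s; rewrite linear_sum.
Qed.

Lemma tau_rigid_Gen_perp (T : rmod) :
  tau_rigid T -> forall M : rmod, Gen T M -> perp T M.
Proof.
case=> P1 [P0 [phi [pi [_ P0proj pi_surj phi_pi tau]]]] M GM E i p i_inj p_surj i_p.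
have [g0 pg0] := P0proj E T p pi p_surj.
have [g1 ig1] : exists g1 : {linear P1 -> M}, forall x, i (g1 x) = g0 (phi x).
  apply: (factor_through_inj (d := g0 \o phi)) => // x.
  by apply/i_p; rewrite /= pg0 (exact_at_comp0 phi_pi).
have [f fphi] := tau M GM g1.
have [s spi] : exists s : {linear T -> E}, forall x, s (pi x) = (g0 \- (i \o f)) x.
  by apply: factor_through_surj => // _ /phi_pi[x <-]; rewrite /= fphi ig1 subrr.
exists s => t; have [x <-] := pi_surj t.
by rewrite spi /= linearB pg0 (exact_at_comp0 i_p) subr0.
Qed.

Definition superfluous_ker (P M : rmod) (p : {linear P -> M}) :=
  forall S : P -> Prop, submodule S ->
    (forall x, exists y z, S y /\ p z = 0 /\ x = y + z) -> forall x, S x.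

Lemma inj_superfluous_ker (P M : rmod) (p : {linear P -> M}) :
  injective p -> superfluous_ker p.
Proof.
move=> p_inj S _ S_ker x; have [y [z [Sy [pz ->]]]] := S_ker x.
have -> : z = 0 by apply: p_inj; rewrite pz linear0.
by rewrite addr0.
Qed.

Lemma superfluous_ker_comp_inj (P M N : rmod) (p : {linear P -> M}) (i : {linear M -> N}) :
  superfluous_ker p -> injective i -> superfluous_ker (i \o p).
Proof.
move=> p_sf i_inj S S_sub S_ker; apply: p_sf => // x.
have [y [z [Sy [ipz ->]]]] := S_ker x; exists y, z; split=> //; split=> //.
by apply: i_inj; rewrite linear0; exact: ipz.
Qed.

Lemma ker_submodule (P M : rmod) (h : {linear P -> M}) : submodule (fun x => h x = 0).
Proof.
split; first exact: linear0.
split=> [x y hx hy | a x hx]; first by rewrite linearD hx hy addr0.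
by rewrite linearZ_LR hx scaler0.
Qed.

Lemma superfluous_ker_vanish (P1 P0 M : rmod) (phi : {linear P1 -> P0}) (h : {linear P1 -> M}) :
  superfluous_ker phi -> (forall y, exists l, phi l = 0 /\ h y = h l) -> forall y, h y = 0.
Proof.
move=> phi_sf h_ker; apply: phi_sf; first exact: ker_submodule.
move=> y; have [l [phil hyl]] := h_ker y.
by exists (y - l), l; rewrite linearB hyl subrr subrK.
Qed.

Section Pushout.
Variables (P1 P0 N : rmod) (phi : {linear P1 -> P0}) (u : {linear P1 -> N}).

Definition pushout_rel (x : P1) : N * P0 := (u x, - phi x).

Fact pushout_rel_is_linear : linear pushout_rel.
Proof.
by move=> a x y; apply: injective_projections; rewrite /= !linearP // opprD scalerN.
Qed.
HB.instance Definition _ :=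
  GRing.isLinear.Build R^c P1 (N * P0)%type *:%R pushout_rel pushout_rel_is_linear.

Definition pushout := coker pushout_rel.
Definition pushout_inl (n : N) : pushout := coker_proj pushout_rel (n, 0).
Definition pushout_inr (x : P0) : pushout := coker_proj pushout_rel (0, x).

Fact pushout_inl_is_linear : linear pushout_inl.
Proof.
move=> a n m; rewrite /pushout_inl -linearP; congr coker_proj.
by apply: injective_projections; rewrite /= ?scaler0 ?addr0.
Qed.
HB.instance Definition _ :=
  GRing.isLinear.Build R^c N pushout *:%R pushout_inl pushout_inl_is_linear.

Fact pushout_inr_is_linear : linear pushout_inr.
Proof.
move=> a x y; rewrite /pushout_inr -linearP; congr coker_proj.
by apply: injective_projections; rewrite /= ?scaler0 ?addr0.
Qed.
HB.instance Definition _ :=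
  GRing.isLinear.Build R^c P0 pushout *:%R pushout_inr pushout_inr_is_linear.

Lemma pushout_projE n x : coker_proj pushout_rel (n, x) = pushout_inl n + pushout_inr x.
Proof.
rewrite /pushout_inl /pushout_inr -linearD; congr coker_proj.
by apply: injective_projections; rewrite /= ?addr0 ?add0r.
Qed.

Lemma pushout_square x : pushout_inl (u x) = pushout_inr (phi x).
Proof.
apply/eqP; rewrite -subr_eq0 /pushout_inl /pushout_inr -linearB; apply/eqP/coker_proj_eq0.
by exists x; apply: injective_projections; rewrite /= ?subr0 ?sub0r.
Qed.

Lemma pushout_inl_inj : (forall x, phi x = 0 -> u x = 0) -> injective pushout_inl.
Proof.
move=> u_ker n m /eqP; rewrite -subr_eq0 -linearB /pushout_inl => /eqP/coker_proj_eq0[x ex].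
have phix : phi x = 0 by apply/eqP; rewrite -oppr_eq0; have /= -> := congr1 snd ex.
by apply/eqP; rewrite -subr_eq0; have /= <- := congr1 fst ex; rewrite u_ker.
Qed.

Lemma pushout_exact (T : rmod) (pi : {linear P0 -> T}) :
  surj pi -> exact_at phi pi ->
  exists p : {linear pushout -> T},
    [/\ surj p, exact_at pushout_inl p & forall x, p (pushout_inr x) = pi x].
Proof.
move=> pi_surj phi_pi.
have [p pE] : exists p : {linear pushout -> T},
    forall e, p (coker_proj pushout_rel e) = (pi \o snd) e.
  apply: factor_through_surj; first exact: coker_proj_surj.
  by move=> e /coker_proj_eq0[x <-]; rewrite /= linearN (exact_at_comp0 phi_pi) oppr0.
have p_inl n : p (pushout_inl n) = 0 by rewrite /pushout_inl pE /= linear0.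
have p_inr x : p (pushout_inr x) = pi x by rewrite /pushout_inr pE.
exists p; split=> // [t | e].
  by have [x <-] := pi_surj t; exists (pushout_inr x).
split=> [| [m <-]]; last exact: p_inl.
have [[n x] <-] := coker_proj_surj e.
rewrite pushout_projE linearD p_inl p_inr add0r => /phi_pi[y <-].
by exists (n + u y); rewrite linearD /= pushout_square.
Qed.

End Pushout.

Lemma perp_extend (T N P1 P0 : rmod) (phi : {linear P1 -> P0}) (pi : {linear P0 -> T})
    (u : {linear P1 -> N}) :
  perp T N -> surj pi -> exact_at phi pi -> (forall x, phi x = 0 -> u x = 0) ->
  exists f : {linear P0 -> N}, forall x, f (phi x) = u x.
Proof.
move=> TN pi_surj phi_pi u_ker.
have inl_inj := pushout_inl_inj u_ker.
have [p [p_surj inl_p p_inr]] := pushout_exact u pi_surj phi_pi.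
have [s ps] := TN _ _ _ inl_inj p_surj inl_p.
have [f inl_f] : exists f : {linear P0 -> N},
    forall x, pushout_inl phi u (f x) = (pushout_inr phi u \- (s \o pi)) x.
  by apply: factor_through_inj => // x; apply/inl_p; rewrite /= linearB p_inr ps subrr.
exists f => x; apply: inl_inj.
by rewrite inl_f /= -pushout_square (exact_at_comp0 phi_pi) linear0 subr0.
Qed.

Lemma exact_at_kerm_surj (U V W : rmod) (a : {linear W -> U}) (f : {linear U -> V}) :
  exact_at a f -> exists a' : {linear W -> kerm f}, surj a'.
Proof.
move=> a_f; pose a' w := Kerm (introT eqP (exact_at_comp0 a_f w)).
have a'L : linear a' by move=> r v w; apply: val_inj; rewrite /= linearP.
exists (linmap a'L) => k; have [w aw] := proj1 (a_f _) (kermP k).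
by exists w; apply: val_inj.
Qed.

Definition superfluous_presentation (T : rmod) :=
  exists (P1 P0 : rmod) (phi : {linear P1 -> P0}) (pi : {linear P0 -> T}),
    [/\ projective P1, projective P0, surj pi, exact_at phi pi & superfluous_ker phi].

Lemma tau_rigid_of_superfluous_presentation (T : rmod) :
  superfluous_presentation T -> (forall M : rmod, Gen T M -> perp T M) -> tau_rigid T.
Proof.
case=> P1 [P0 [phi [pi [P1proj P0proj pi_surj phi_pi phi_sf]]]] Gen_perp.
exists P1, P0, phi, pi; split=> // M GM g.
pose gK : {linear kerm phi -> M} := g \o val.
pose q : {linear M -> coker gK} := coker_proj gK.
have q_surj : surj q by apply: coker_proj_surj.
have [fN fN_phi] : exists fN : {linear P0 -> coker gK},
    forall x, fN (phi x) = (q \o g) x.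
  apply: (perp_extend (Gen_perp _ (Gen_epi q_surj GM)) pi_surj phi_pi) => x phix.
  by apply/coker_proj_eq0; exists (Kerm (introT eqP phix)).
have [f qf] := P0proj M _ q fN q_surj.
have h0 := @superfluous_ker_vanish _ _ _ phi (g \- (f \o phi)) phi_sf.
exists f => x; apply/eqP; rewrite eq_sym -subr_eq0; apply/eqP/h0 => y.
have /coker_proj_eq0[k gk] : q ((g \- (f \o phi)) y) = 0.
  by rewrite /= linearB qf fN_phi subrr.
exists (val k); split; first exact: kermP.
by move: gk => /= <-; rewrite kermP linear0 subr0.
Qed.

Lemma superfluous_presentation_of_cover (T P0 : rmod) (pi : {linear P0 -> T}) :
  projective P0 -> surj pi ->
  (exists (P1 : rmod) (p : {linear P1 -> kerm pi}), projective_cover p) ->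
  superfluous_presentation T.
Proof.
move=> P0proj pi_surj [P1 [p [P1proj p_surj p_sf]]].
exists P1, P0, (val \o p), pi; split=> //; last exact: superfluous_ker_comp_inj val_inj.
move=> v; split=> [piv | [x <-]]; last exact: kermP.
by have [x px] := p_surj (Kerm (introT eqP piv)); exists x; rewrite /= px.
Qed.

Lemma right_perfect_superfluous_presentation (T : rmod) :
  right_perfect R -> superfluous_presentation T.
Proof.
move=> Rperf; have [P0 [pi [P0proj pi_surj _]]] := Rperf T.
exact: superfluous_presentation_of_cover P0proj pi_surj (Rperf _).
Qed.

Lemma semiperfect_fin_presented_superfluous_presentation (T : rmod) :
  semiperfect R -> fin_presented T -> superfluous_presentation T.
Proof.
move=> Rsp [n [m [a [b [b_surj a_b]]]]].
apply: (superfluous_presentation_of_cover (@rV_projective n) b_surj); apply: Rsp.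
by have [a' a'_surj] := exact_at_kerm_surj a_b; exists m, a'.
Qed.

Lemma pd_le1_superfluous_presentation (T : rmod) :
  pd_le1 T -> superfluous_presentation T.
Proof.
case=> P1 [P0 [a [b [P1proj P0proj a_inj b_surj a_b]]]].
by exists P1, P0, a, b; split=> //; apply: inj_superfluous_ker.
Qed.

End Modules.

Theorem corollary5p7 (R : pzRingType) (T : lmodType R^c) :
  (right_perfect R \/ (semiperfect R /\ fin_presented T) \/ pd_le1 T) ->
  (tau_rigid T <-> (forall M : lmodType R^c, Gen T M -> perp T M)) /\
  (quasi_tilting T -> tau_rigid T).
Proof.
move=> hyp.
have presT : superfluous_presentation T.
  case: hyp => [Rperf | [[Rsp Tfp] | Tpd]].
  - exact: right_perfect_superfluous_presentation.
  - exact: semiperfect_fin_presented_superfluous_presentation.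
  - exact: pd_le1_superfluous_presentation.
have Gen_perp_tau := tau_rigid_of_superfluous_presentation presT.
split; first by split; [exact: tau_rigid_Gen_perp | exact: Gen_perp_tau].
by case=> _ /Gen_perp_tau.
Qed.
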